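(* Let $H$ be a group of isometries of $\mathcal{C}_k$ (generated by Euclidean isometries, phases and the rotation map) which contains the circle translation $S_\varphi$. Then $\mathcal{C}_k(H)\neq\emptyset$ only if $\varphi=2r\pi/k$ for some $r\in\mathbb{Z}$.
   Context: Fix $\mu_0>0$, $S^1=\mathbb{R}/\frac{2\pi}{\mu_0}\mathbb{Z}$. $\mathcal{C}_k$ is the moduli space of framed $SU(2)$ calorons on $S^1\times\mathbb{R}^3$ (finite-action anti-self-dual $SU(2)$ connections with the standard caloron boundary conditions) with monopole charges $(k,k)$ and equal monopole masses $\mu_0/2$, modulo gauge transformations equal to the identity at spatial infinity. $S_\varphi$ is the rotation of the circle factor by angle $\varphi$ (i.e. $t\mapsto t+\varphi/\mu_0$), acting on calorons by pullback. $\mathcal{C}_k(H)$ is the set of $[A]\in\mathcal{C}_k$ with $[h\cdot A]=[A]$ for all $h\in H$. Known correspondence (Charbonneau–Hurtubise): $\mathcal{C}_k$ is biholomorphic to the moduli space of non-singular monad matrices $(A,B,C,D)$ ($A,B\in Mat_{k\times k}(\mathbb{C})$, $A$ invertible, $C\in Mat_{k\times 2}$, $D\in Mat_{2\times k}$, $[A,B]+CD=0$ plus full-rank conditions, modulo simultaneous $GL(k,\mathbb{C})$ conjugation $(gAg^{-1},gBg^{-1},gC,Dg^{-1})$), under which $S_\varphi$ acts by $(A,B,C,D)\mapsto(e^{-i\varphi}A,B,C\,\mathrm{adj}(\sigma_\varphi),\sigma_\varphi D)$ with $\sigma_\varphi=\mathrm{diag}(e^{-3i\varphi/4},e^{-i\varphi/4})$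 and $\mathrm{adj}(\sigma)=\det(\sigma)\sigma^{-1}$. *)

From mathcomp Require Import all_boot all_order all_algebra.
From mathcomp Require Import complex.
From mathcomp Require Import reals trigo.
Set Implicit Arguments. Unset Strict Implicit. Unset Printing Implicit Defensive.
Import Order.TTheory GRing.Theory Num.Theory.
Local Open Scope ring_scope.
Local Open Scope complex_scope.

Section Monads.
Variable R : realType.
Local Notation C := (R[i]).

Definition expi (x : R) : C := (cos x) +i* (sin x).

Record monad (k : nat) := Monad {
  mA : 'M[C]_k;
  mB : 'M[C]_k;
  mC : 'M[C]_(k, 2);
  mD : 'M[C]_(2, k) }.

(* Non-singular monad (Charbonneau--Hurtubise): A invertible,
   [A,B] + CD = 0, and for all (x,y) in C^2 the map
   alpha = (x - A ; y - B ; D) : C^k -> C^k + C^k + C^2 is injective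
   (full column rank k), and beta = (-(y - B), x - A, C) :
   C^k + C^k + C^2 -> C^k is surjective (full row rank k). *)
Definition monad_alpha k (M : monad k) (x y : C) : 'M[C]_(k + k + 2, k) :=
  col_mx (col_mx (x%:M - mA M) (y%:M - mB M)) (mD M).
Definition monad_beta k (M : monad k) (x y : C) : 'M[C]_(k, k + k + 2) :=
  row_mx (row_mx (- (y%:M - mB M)) (x%:M - mA M)) (mC M).

Definition nonsingular_monad k (M : monad k) : Prop :=
  [/\ mA M \in unitmx,
      mA M *m mB M - mB M *m mA M + mC M *m mD M = 0,
      (forall x y : C, \rank (monad_alpha M x y) = k) &
      (forall x y : C, \rank (monad_beta M x y) = k)].

Definition gl_act k (g : 'M[C]_k) (M : monad k) : monad k :=
  Monad (g *m mA M *m invmx g) (g *m mB M *m invmx g)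
        (g *m mC M) (mD M *m invmx g).

(* Two monads represent the same point of the moduli space C_k. *)
Definition monad_equiv k (M N : monad k) : Prop :=
  exists2 g : 'M[C]_k, g \in unitmx & N = gl_act g M.

Definition sigma (phi : R) : 'M[C]_2 :=
  diag_mx (\row_(j < 2) if j == 0 then expi (- (3%:R * phi / 4%:R))
                        else expi (- (phi / 4%:R))).
Definition adjm2 (s : 'M[C]_2) : 'M[C]_2 := \det s *: invmx s.

Definition S_rot k (phi : R) (M : monad k) : monad k :=
  Monad (expi (- phi) *: mA M) (mB M) (mC M *m adjm2 (sigma phi))
        (sigma phi *m mD M).

(* A map on representatives that descends to a well-defined map of the
   moduli space C_k (preserves non-singularity and the equivalence). *)
Definition moduli_map k (h : monad k -> monad k) : Prop :=
  (forall M, nonsingular_monad M -> nonsingular_monad (h M)) /\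
  (forall M N, monad_equiv M N -> monad_equiv (h M) (h N)).

Definition fixed_points k (H : (monad k -> monad k) -> Prop)
  (M : monad k) : Prop :=
  nonsingular_monad M /\ forall h, H h -> monad_equiv (h M) M.

End Monads.

(* The determinant of A is invariant under the GL(k) action, while S_phi
   multiplies it by e^{-ik phi}.  At a fixed point A is invertible, so
   det A <> 0 forces e^{-ik phi} = 1, that is k phi is a multiple of 2 pi. *)
From mathcomp Require Import all_boot all_order all_algebra.
From mathcomp Require Import complex.
From mathcomp Require Import reals trigo.
From mathcomp Require Import ring.

Set Implicit Arguments.
Unset Strict Implicit.
Unset Printing Implicit Defensive.
Import Order.TTheory GRing.Theory Num.Theory.
Local Open Scope ring_scope.

Lemma floor_mod_itv (R : archiRealFieldType) (x T : R) : 0 < T ->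
  0 <= x - T * (Num.floor (x / T))%:~R < T.
Proof.
move=> T_gt0; rewrite subr_ge0 ltrBlDl mulrC -ler_pdivlMr // floor_le /=.
rewrite -[X in _ + X]mul1r -mulrDl -ltr_pdivrMr //.
by have := floorD1_gt (x / T); rewrite intrD.
Qed.

Section CosinePeriod.
Variable R : realType.

Lemma cosDz_2pi (a : R) (n : int) : cos (a + pi *+ 2 * n%:~R) = cos a.
Proof.
case: n => m; first by rewrite mulr_natr (periodicn (@cosD2pi R)).
rewrite NegzE intrN mulrN mulr_natr.
by rewrite -[in RHS](subrK (pi *+ 2 *+ m.+1) a) (periodicn (@cosD2pi R)).
Qed.

Lemma cos_eq1_0_2pi (y : R) : 0 <= y < pi *+ 2 -> cos y = 1 -> y = 0.
Proof.
move=> /andP[y_ge0 y_lt2pi] cy1.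
have pi_itv (z : R) : 0 <= z <= pi -> z \in `[0, pi] by rewrite in_itv.
have pi_in : (0 : R) \in `[0, pi] by rewrite pi_itv ?lexx ?pi_ge0.
case: (lerP y pi) => [y_lepi | pi_lty].
  by apply: cos_inj; rewrite ?pi_itv ?y_ge0 // cy1 cos0.
have : pi *+ 2 - y = 0.
  apply: cos_inj => //.
    by rewrite pi_itv // subr_ge0 ltW //= lerBlDl mulr2n lerD2r ltW.
  by rewrite addrC cosD2pi cosN cy1 cos0.
by move/eqP; rewrite subr_eq0 => /eqP y2pi; rewrite y2pi ltxx in y_lt2pi.
Qed.

Lemma cos_eq1 (x : R) : cos x = 1 -> exists n : int, x = pi *+ 2 * n%:~R.
Proof.
move=> cx1; have two_pi_gt0 : (0 : R) < pi *+ 2 by rewrite pmulrn_lgt0 ?pi_gt0.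
set n := Num.floor (x / (pi *+ 2)); exists n.
apply/eqP; rewrite -subr_eq0; apply/eqP/cos_eq1_0_2pi; first exact: floor_mod_itv.
by rewrite -[in RHS]cx1 -[in RHS](subrK (pi *+ 2 * n%:~R) x) cosDz_2pi.
Qed.

End CosinePeriod.

Section ComplexExponential.
Variable R : realType.
Local Open Scope complex_scope.

Lemma expiD (a b : R) : expi a * expi b = expi (a + b).
Proof.
rewrite /expi cosD sinD; apply/eqP; rewrite eq_complex /=.
apply/andP; split; apply/eqP; ring.
Qed.

Lemma expiMn (a : R) (n : nat) : expi a ^+ n = expi (a *+ n).
Proof.
elim: n => [|n IHn]; first by rewrite expr0 mulr0n /expi cos0 sin0.
by rewrite exprS IHn expiD mulrS.
Qed.

Lemma expi_eq1 (x : R) : expi x = 1 -> exists n : int, x = pi *+ 2 * n%:~R.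
Proof. by move/(congr1 (@complex.Re R)) => /= /cos_eq1. Qed.

End ComplexExponential.

Section DeterminantOfA.
Variables (R : realType) (k : nat).

Lemma det_mA_gl_act (g : 'M[R[i]]_k) (M : monad R k) :
  g \in unitmx -> \det (mA (gl_act g M)) = \det (mA M).
Proof.
by move=> g_unit; rewrite /= !det_mulmx det_inv mulrC mulrA mulVr ?mul1r.
Qed.

Lemma monad_equiv_det_mA (M N : monad R k) :
  monad_equiv M N -> \det (mA N) = \det (mA M).
Proof. by case=> g g_unit ->; apply: det_mA_gl_act. Qed.

Lemma det_mA_S_rot (phi : R) (M : monad R k) :
  \det (mA (S_rot phi M)) = expi (- phi *+ k) * \det (mA M).
Proof. by rewrite /= detZ expiMn. Qed.

Lemma S_rot_fixed_expi (phi : R) (M : monad R k) :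
  mA M \in unitmx -> monad_equiv (S_rot phi M) M -> expi (- phi *+ k) = 1.
Proof.
rewrite unitmxE => detA_unit /monad_equiv_det_mA; rewrite det_mA_S_rot.
by rewrite -{1}[\det (mA M)]mul1r => /(mulIr detA_unit).
Qed.

End DeterminantOfA.

Theorem mainTheorem4 (R : realType) (k : nat) (hk : (0 < k)%N) (phi : R)
  (H : (monad R k -> monad R k) -> Prop) :
  (forall h, H h -> moduli_map h) ->
  (forall g h, H g -> H h -> H (g \o h)) ->
  H id ->
  H (S_rot phi) ->
  (exists M : monad R k, fixed_points H M) ->
  exists r : int, phi = 2%:R * r%:~R * pi / k%:R.
Proof.
move=> _ _ _ HS [M [[A_unit _ _ _] M_fixed]].
have [n kphi] := expi_eq1 (S_rot_fixed_expi A_unit (M_fixed _ HS)).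
exists (- n).
have k_neq0 : (k%:R : R) != 0 by rewrite pnatr_eq0 -lt0n.
apply: (mulIf k_neq0); rewrite mulfVK // mulr_natr -[phi *+ k]opprK -mulNrn kphi.
by rewrite intrN mulr2n; ring.
Qed.
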